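(* For integers $0\le k\le n$, the Bernoulli numbers satisfy \[ \sum_{j=0}^{n-k}\binom{n-k}{j}B_{j+k}=\begin{cases} \sum_{j=0}^{k}\binom{k}{j}(-1)^{j}B_{n-j} & \text{if } 0\le k\le n-2,\ n\ge2,\\[2pt] \sum_{j=0}^{k}\binom{k}{j}(-1)^{j}B_{n-j}+(-1)^{n-1} & \text{if } k=n-1,\ n\ge1,\\[2pt] \sum_{j=0}^{k}\binom{k}{j}(-1)^{j}B_{n-j}+n(-1)^{n-1} & \text{if } k=n,\ n\ge0. \end{cases} \]
   Context: The Bernoulli numbers $B_n$ are defined by $\sum_{n\ge0}B_n\frac{t^n}{n!}=\frac{t}{e^t-1}$ (so $B_1=-\frac12$). *)

From HB Require Import structures.
From mathcomp Require Import all_boot all_order all_algebra.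
Set Implicit Arguments. Unset Strict Implicit. Unset Printing Implicit Defensive.
Import Order.TTheory GRing.Theory Num.Theory.
Local Open Scope ring_scope.

(* bern_list n = [:: B_0; ...; B_(n-1)], computed by the recurrence
   B_0 = 1,  B_m = - 1/(m+1) * \sum_(j < m) 'C(m+1, j) B_j   (m >= 1),
   which is equivalent to the generating function t/(e^t - 1) (so B_1 = -1/2). *)
Fixpoint bern_list (n : nat) : seq rat :=
  match n with
  | 0 => [::]
  | m.+1 =>
      let s := bern_list m in
      rcons s (if m == 0%N then 1
               else - (m.+1%:R)^-1 * \sum_(j < m) ('C(m.+1, j))%:R * nth 0 s j)
  end.

Definition bernoulli (n : nat) : rat := nth 0 (bern_list n.+1) n.

(* Both sides satisfy the Pascal recurrence in their two indices: with
   L(m, k) = sum_j C(m, j) B_(j+k) and R(k, n) = sum_j C(k, j) (-1)^j B_(n-j),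
   L(m+1, k) = L(m, k+1) + L(m, k) and R(k+1, n+1) = R(k, n+1) - R(k, n).
   Hence the defect L(m, k) - R(k, m+k) satisfies the same recurrence, and
   induction on k reduces it to k = 0, where the Bernoulli recurrence
   sum_(j <= m) C(m, j) B_j = B_m + [m = 1] gives its value. *)
From HB Require Import structures.
From mathcomp Require Import all_boot all_order all_algebra.
From mathcomp Require Import ring zify.
Set Implicit Arguments. Unset Strict Implicit. Unset Printing Implicit Defensive.
Import Order.TTheory GRing.Theory Num.Theory.
Local Open Scope ring_scope.

Section BinomialTransforms.

Variables (R : comRingType) (a : nat -> R).

Definition binom_shift_sum m k := \sum_(j < m.+1) 'C(m, j)%:R * a (j + k).

Definition binom_alt_sum k n := \sum_(j < k.+1) 'C(k, j)%:R * (-1) ^+ j * a (n - j).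

Lemma binom_shift_sumS m k :
  binom_shift_sum m.+1 k = binom_shift_sum m k.+1 + binom_shift_sum m k.
Proof.
have head_tail : binom_shift_sum m k
    = a k + \sum_(i < m.+1) 'C(m, i.+1)%:R * a (i.+1 + k).
  rewrite /binom_shift_sum big_ord_recl big_ord_recr /=.
  by rewrite bin0 mul1r bin_small // mul0r addr0.
rewrite head_tail /binom_shift_sum big_ord_recl /=.
under eq_bigr => i _ do rewrite /bump add1n binS natrD mulrDl.
rewrite big_split /= bin0 mul1r add0n [RHS]addrC -addrA; congr (_ + (_ + _)).
by apply: eq_bigr => i _; rewrite addSnnS.
Qed.

Lemma binom_alt_sumS k n :
  binom_alt_sum k.+1 n.+1 = binom_alt_sum k n.+1 - binom_alt_sum k n.
Proof.
have head_tail : binom_alt_sum k n.+1 = a n.+1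
    + \sum_(i < k.+1) 'C(k, i.+1)%:R * (-1) ^+ i.+1 * a (n.+1 - i.+1).
  rewrite /binom_alt_sum big_ord_recl big_ord_recr /=.
  by rewrite bin0 expr0 !mul1r subn0 bin_small // !mul0r addr0.
rewrite head_tail /binom_alt_sum big_ord_recl /=.
under eq_bigr => i _ do rewrite /bump add1n binS natrD !mulrDl.
rewrite big_split /= bin0 expr0 !mul1r subn0 -addrA; congr (_ + (_ + _)).
by rewrite -sumrN; apply: eq_bigr => i _; rewrite subSS exprS mulN1r mulrN mulNr.
Qed.

End BinomialTransforms.

Lemma size_bern_list n : size (bern_list n) = n.
Proof. by elim: n => //= n IHn; rewrite size_rcons IHn. Qed.

Lemma nth_bern_list n i : (i < n)%N -> nth 0 (bern_list n) i = bernoulli i.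
Proof.
elim: n => // n IHn; rewrite ltnS leq_eqVlt => /predU1P[-> // | lt_in].
by rewrite /= nth_rcons size_bern_list lt_in IHn.
Qed.

Lemma bernoulliS m : bernoulli m.+1 =
  - (m.+2%:R)^-1 * \sum_(j < m.+1) 'C(m.+2, j)%:R * bernoulli j.
Proof.
rewrite {1}/bernoulli.
have -> : bern_list m.+2 = rcons (bern_list m.+1)
    (- (m.+2%:R)^-1 * \sum_(j < m.+1) 'C(m.+2, j)%:R * nth 0 (bern_list m.+1) j).
  by [].
rewrite nth_rcons size_bern_list ltnn eqxx.
by congr (_ * _); apply: eq_bigr => j _; rewrite nth_bern_list.
Qed.

Lemma sum_bin_bernoulli m : \sum_(j < m.+2) 'C(m.+2, j)%:R * bernoulli j = 0.
Proof.
rewrite big_ord_recr /= bernoulliS binSn mulrA mulrN mulfV ?pnatr_eq0 //.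
by rewrite mulN1r addrN.
Qed.

Lemma binom_shift_sum_bernoulli0 m :
  binom_shift_sum bernoulli m 0 = bernoulli m + (m == 1%N)%:R.
Proof.
rewrite /binom_shift_sum; case: m => [|[|m]].
- by rewrite big_ord1 mul1r addr0.
- by rewrite big_ord_recr big_ord1 /= !mul1r addrC.
rewrite big_ord_recr /= binn mul1r addn0 addr0.
by under eq_bigr => j _ do rewrite addn0; rewrite sum_bin_bernoulli add0r.
Qed.

Definition bernoulli_defect m k : rat :=
  if m == 0%N then k%:R * (-1) ^+ k.-1
  else if m == 1%N then (-1) ^+ k else 0.

Lemma bernoulli_defectS m k :
  bernoulli_defect m k.+1 = bernoulli_defect m.+1 k - bernoulli_defect m k.
Proof.
rewrite /bernoulli_defect; case: m => [|[|m]] /=; rewrite ?subrr //.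
- case: k => [|k]; first by rewrite mul0r subr0 mul1r.
  by rewrite /= exprS -!natr1; ring.
- by rewrite exprS mulN1r sub0r.
Qed.

Lemma binom_shift_sub_alt_bernoulli m k :
  binom_shift_sum bernoulli m k - binom_alt_sum bernoulli k (m + k)
  = bernoulli_defect m k.
Proof.
elim: k m => [|k IHk] m.
  rewrite binom_shift_sum_bernoulli0 /binom_alt_sum big_ord1 /= mulr1 mul1r.
  by rewrite addn0 subn0 addrAC subrr add0r /bernoulli_defect; case: m => [|[|m]].
rewrite addnS binom_alt_sumS bernoulli_defectS -(IHk m) -(IHk m.+1) addSn.
rewrite binom_shift_sumS; ring.
Qed.

Lemma bernoulli_defect_subn n k : (k <= n)%N ->
  bernoulli_defect (n - k)%N k =
  (if k == n then n%:R * (-1) ^+ n.-1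
   else if k.+1 == n then (-1) ^+ n.-1 else 0).
Proof.
move=> /subnK <-; rewrite addnK /bernoulli_defect.
case: (n - k)%N => [|[|m]] /=; first by rewrite eqxx.
  by rewrite eqxx ifN //; lia.
by rewrite !ifN //; lia.
Qed.

Theorem mainTheorem3 (n k : nat) (hkn : (k <= n)%N) :
  \sum_(j < (n - k).+1) ('C(n - k, j))%:R * bernoulli (j + k) =
  \sum_(j < k.+1) ('C(k, j))%:R * (-1) ^+ j * bernoulli (n - j)
  + (if k == n then n%:R * (-1) ^+ n.-1
     else if k.+1 == n then (-1) ^+ n.-1
     else 0).
Proof.
rewrite -bernoulli_defect_subn // -(binom_shift_sub_alt_bernoulli (n - k) k).
by rewrite subnK // addrC subrK.
Qed.
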